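(* Let $n$ be a nonnegative integer and $a,c\in\mathbb{C}$ such that all series below are defined (no lower parameter zero or a negative integer). Then \[ {}_3F_2\!\left(\left.{-n,\frac{a}{2},\frac{a+1}{2} \atop a,c}\right| 4\right) =(-1)^n\,{}_3F_2\!\left(\left.{-n,\frac{2c-a-n-1}{2},\frac{2c-a-n}{2} \atop 2c-a-n-1,c}\right| 4\right). \] Equivalently, with $Q_n(a,c)=(1+a-c)_n(c)_n\,{}_3F_2\!\left(\left.{-n,\frac{a}{2},\frac{a+1}{2} \atop a,c}\right| 4\right)$ one has $Q_n(a,c)=Q_n(2c-a-n-1,c)$, and the function $W_n(x,y)=Q_n\!\left(x,\frac{1+x+y+n}{2}\right)$ satisfies $W_n(x,y)=W_n(y,x)$.
   Context: For $a\in\mathbb{C}$, $(a)_0=1$ and $(a)_k=a(a+1)\cdots(a+k-1)$ for $k\ge1$. The hypergeometric series is ${}_rF_s\!\left(\left.{\alpha_1,\ldots,\alpha_r\atop \beta_1,\ldots,\beta_s}\right|z\right)=\sum_{k\ge0}\frac{(\alpha_1)_k\cdots(\alpha_r)_k}{k!(\beta_1)_k\cdots(\beta_s)_k}z^k$, with no lower parameter zero or a negative integer; when an upper parameter is $-n$ it is a finite sum over $0\le k\le n$. *)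

From HB Require Import structures.
From mathcomp Require Import all_boot all_order all_algebra.
Set Implicit Arguments. Unset Strict Implicit. Unset Printing Implicit Defensive.
Import Order.TTheory GRing.Theory Num.Theory.
Local Open Scope ring_scope.

Definition poch (C : pzRingType) (a : C) (k : nat) : C :=
  \prod_(i < k) (a + i%:R).

Definition not_nonpos_int (C : pzRingType) (x : C) : Prop :=
  forall m : nat, x <> - m%:R.

Definition F32_term (C : fieldType) (n : nat) (b1 b2 d1 d2 z : C) : C :=
  \sum_(0 <= k < n.+1)
    poch (- n%:R) k * poch b1 k * poch b2 k
    / ((k`!)%:R * poch d1 k * poch d2 k) * z ^+ k.

From mathcomp Require Import all_boot all_order all_algebra.
From mathcomp Require Import ring.
Set Implicit Arguments. Unset Strict Implicit. Unset Printing Implicit Defensive.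
Import Order.TTheory GRing.Theory Num.Theory.
Local Open Scope ring_scope.

(* Multiplying by (c)_n turns the left-hand 3F2 into the polynomial
   T_n(a,c) = sum_k (-1)^k C(n,k) (a+k)_k (c+k)_(n-k), and the theorem becomes
   T_n(a,c) = (-1)^n T_n(2c-a-n-1, c).  Both sides obey the same difference
   equation in c, whose inhomogeneous term is (n+1) times the level-n
   instance, so by induction on n their difference at level n+1 is a
   1-periodic polynomial in c.  At c = -n both sides collapse to a single
   Pochhammer product and agree, so that difference has infinitely many roots
   and vanishes. *)

Section Pochhammer.
Variable R : comPzRingType.
Implicit Types x y : R.

Lemma poch0 x : poch x 0 = 1.
Proof. by rewrite /poch big_ord0. Qed.

Lemma pochS x k : poch x k.+1 = poch x k * (x + k%:R).
Proof. by rewrite /poch big_ord_recr. Qed.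

Lemma pochSl x k : poch x k.+1 = x * poch (x + 1) k.
Proof.
rewrite /poch big_ord_recl /= addr0; congr (_ * _).
by apply: eq_bigr => i _; rewrite /bump add1n -natr1; ring.
Qed.

Lemma poch_add x k m : poch x (k + m) = poch x k * poch (x + k%:R) m.
Proof.
rewrite /poch big_split_ord; congr (_ * _).
by apply: eq_bigr => i _; rewrite natrD addrA.
Qed.

Lemma pochSB x m : poch (x + 1) m.+1 - poch x m.+1 = m.+1%:R * poch (x + 1) m.
Proof. by rewrite pochS pochSl -natr1; ring. Qed.

Lemma poch_eq0 x m j : (j < m)%N -> x + j%:R = 0 -> poch x m = 0.
Proof. by move=> ltjm xj0; rewrite /poch (bigD1 (Ordinal ltjm)) //= xj0 mul0r. Qed.

Lemma pochN y m : poch (- y) m.+1 = (-1) ^+ m.+1 * poch (y - m%:R) m.+1.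
Proof.
rewrite /poch (eq_bigr (fun i : 'I_m.+1 => - (y - i%:R))); last by move=> i _; ring.
rewrite prodrN card_ord; congr (_ * _); rewrite [RHS](reindex_inj rev_ord_inj).
by apply: eq_bigr => i _; rewrite /= subSS natrB; [ring | rewrite -ltnS].
Qed.

Lemma poch_Nnat n k : (k <= n)%N ->
  poch (- n%:R : R) k = (-1) ^+ k * 'C(n, k)%:R * k`!%:R.
Proof.
rewrite -mulrA -natrM bin_ffact.
elim: k => [|k IHk] ltkn; first by rewrite poch0 ffactn0 mulr1.
rewrite pochS IHk ?(ltnW ltkn) // ffactnSr natrM natrB ?(ltnW ltkn) // exprS; ring.
Qed.

End Pochhammer.

Lemma poch_neq0 (R : idomainType) (x : R) k : not_nonpos_int x -> poch x k != 0.
Proof.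
move=> x_ok; elim: k => [|k IHk]; first by rewrite poch0 oner_neq0.
by rewrite pochS mulf_neq0 // addr_eq0; apply/eqP.
Qed.

Lemma poch_half (F : numFieldType) (a : F) k :
  poch (a / 2) k * poch ((a + 1) / 2) k * 4 ^+ k = poch a (k + k).
Proof.
elim: k => [|k IHk]; first by rewrite !poch0 !mulr1.
by rewrite addSn addnS !pochS -IHk exprS -!natr1 natrD; field.
Qed.

Section HypergeometricSum.
Variable R : comPzRingType.
Implicit Types a c : R.

Definition hsum n a c : R :=
  \sum_(k < n.+1) (-1) ^+ k * 'C(n, k)%:R * poch (a + k%:R) k
                  * poch (c + k%:R) (n - k).

Definition hsum_refl n a c : R := (-1) ^+ n * hsum n (2 * c - a - n%:R - 1) c.

Lemma hsum0 a c : hsum 0 a c = 1.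
Proof. by rewrite /hsum big_ord1 !poch0 bin0 !mulr1. Qed.

Lemma hsumSBl n a c :
  hsum n.+1 (a + 1) c - hsum n.+1 a c = - n.+1%:R * hsum n (a + 2) (c + 1).
Proof.
rewrite /hsum -sumrB big_ord_recl /= !addr0 !poch0 subrr add0r mulr_sumr.
apply: eq_bigr => i _; rewrite /bump add1n subSS.
have -> : a + 1 + i.+1%:R = (a + i.+1%:R) + 1 by ring.
have -> : c + i.+1%:R = c + 1 + i%:R by rewrite -natr1; ring.
rewrite -mulrBl -mulrBr pochSB.
have -> : a + i.+1%:R + 1 = a + 2 + i%:R by rewrite -natr1; ring.
have bin_step : i.+1%:R * 'C(n.+1, i.+1)%:R = n.+1%:R * 'C(n, i)%:R :> R.
  by rewrite -!natrM -mul_bin_diag.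
rewrite exprS; transitivity (- (-1) ^+ i * (i.+1%:R * 'C(n.+1, i.+1)%:R)
  * poch (a + 2 + i%:R) i * poch (c + 1 + i%:R) (n - i)); first by ring.
by rewrite bin_step; ring.
Qed.

Lemma hsumSBr n a c :
  hsum n.+1 a (c + 1) - hsum n.+1 a c = n.+1%:R * hsum n a (c + 1).
Proof.
rewrite /hsum -sumrB big_ord_recr /= subnn !poch0 subrr addr0 mulr_sumr.
apply: eq_bigr => i _ /=.
have lein : (i <= n)%N by rewrite -ltnS.
have -> : c + 1 + i%:R = (c + i%:R) + 1 by ring.
rewrite subSn // -mulrBr pochSB.
have bin_step : (n - i).+1%:R * 'C(n.+1, i)%:R = n.+1%:R * 'C(n, i)%:R :> R.
  by rewrite -!natrM -subSn // mul_bin_down.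
transitivity ((-1) ^+ i * ((n - i).+1%:R * 'C(n.+1, i)%:R) * poch (a + i%:R) i
  * poch (c + i%:R + 1) (n - i)); first by ring.
by rewrite bin_step; ring.
Qed.

Lemma hsum_reflSBr n a c :
  hsum_refl n.+1 a (c + 1) - hsum_refl n.+1 a c = n.+1%:R * hsum_refl n a (c + 1).
Proof.
rewrite /hsum_refl; set b := 2 * c - a - n.+1%:R - 1.
have -> : 2 * (c + 1) - a - n.+1%:R - 1 = b + 1 + 1 by rewrite /b; ring.
have -> : 2 * (c + 1) - a - n%:R - 1 = b + 1 + 2 by rewrite /b -natr1; ring.
rewrite -mulrBr.
have telescope : hsum n.+1 (b + 1 + 1) (c + 1) - hsum n.+1 b c =
    (hsum n.+1 (b + 1 + 1) (c + 1) - hsum n.+1 (b + 1 + 1) c)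
  + (hsum n.+1 (b + 1 + 1) c - hsum n.+1 (b + 1) c)
  + (hsum n.+1 (b + 1) c - hsum n.+1 b c) by ring.
rewrite telescope hsumSBr !hsumSBl.
have -> : b + 2 = b + 1 + 1 by ring.
by rewrite exprS; ring.
Qed.

Lemma hsum_Nnat n a :
  hsum n.+1 a (- n%:R) = (-1) ^+ n.+1 * poch (a + n.+1%:R) n.+1.
Proof.
rewrite /hsum big_ord_recr /= big1 ?add0r; first by rewrite subnn poch0 binn !mulr1.
move=> i _ /=; have lein : (i <= n)%N by rewrite -ltnS.
rewrite (@poch_eq0 _ (- n%:R + i%:R) _ (n - i)) ?mulr0 ?subSn //.
by rewrite natrB //; ring.
Qed.

Lemma hsum_refl_Nnat n a :
  hsum_refl n.+1 a (- n%:R) = (-1) ^+ n.+1 * poch (a + n.+1%:R) n.+1.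
Proof.
rewrite /hsum_refl hsum_Nnat.
have -> : 2 * - n%:R - a - n.+1%:R - 1 + n.+1%:R = - (a + n.+1%:R + n%:R) by ring.
by rewrite pochN addrK signrMK.
Qed.

End HypergeometricSum.

Lemma hsum_rmorph (R S : comPzRingType) (f : {rmorphism R -> S}) n a c :
  f (hsum n a c) = hsum n (f a) (f c).
Proof.
rewrite /hsum rmorph_sum; apply: eq_bigr => k _.
rewrite !rmorphM rmorph_sign rmorph_nat /poch !rmorph_prod.
by congr (_ * _ * _ * _); apply: eq_bigr => i _; rewrite !rmorphD !rmorph_nat.
Qed.

Lemma hsum_refl_rmorph (R S : comPzRingType) (f : {rmorphism R -> S}) n a c :
  f (hsum_refl n a c) = hsum_refl n (f a) (f c).
Proof.
rewrite rmorphM rmorph_sign hsum_rmorph.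
by rewrite !rmorphB rmorphM rmorph1 !rmorph_nat.
Qed.

Lemma periodic_poly_eq0 (R : numDomainType) (p : {poly R}) x0 :
  (forall x, p.[x + 1] = p.[x]) -> root p x0 -> p = 0.
Proof.
move=> p_periodic /eqP px0.
have p_roots m : p.[x0 + m%:R] = 0.
  by elim: m => [|m IHm]; rewrite ?addr0 // -natr1 addrA p_periodic.
apply/eqP; apply: contraT => p_neq0.
have := max_poly_roots p_neq0 (rs := [seq x0 + m%:R | m <- iota 0 (size p)]).
rewrite size_map size_iota ltnn; apply.
  by apply/allP => _ /mapP[m _ ->]; rewrite /root p_roots.
by rewrite map_inj_uniq ?iota_uniq // => m1 m2 /addrI /eqP; rewrite eqr_nat => /eqP.
Qed.

Lemma hsum_eq_refl (R : numDomainType) n (a c : R) : hsum n a c = hsum_refl n a c.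
Proof.
elim: n a c => [|n IHn] a c; first by rewrite /hsum_refl !hsum0 mul1r.
pose p : {poly R} := hsum n.+1 a%:P 'X - hsum_refl n.+1 a%:P 'X.
have pE x : p.[x] = hsum n.+1 a x - hsum_refl n.+1 a x.
  rewrite -horner_evalE rmorphB /= hsum_rmorph hsum_refl_rmorph.
  by rewrite /= !horner_evalE hornerC hornerX.
suff p0 : p = 0 by apply/eqP; rewrite -subr_eq0 -pE p0 horner0.
apply: (periodic_poly_eq0 (x0 := - n%:R)) => [x|]; last first.
  by rewrite /root pE hsum_Nnat hsum_refl_Nnat subrr.
apply/eqP; rewrite -subr_eq0 !pE.
have -> : hsum n.+1 a (x + 1) - hsum_refl n.+1 a (x + 1)
          - (hsum n.+1 a x - hsum_refl n.+1 a x)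
        = (hsum n.+1 a (x + 1) - hsum n.+1 a x)
          - (hsum_refl n.+1 a (x + 1) - hsum_refl n.+1 a x) by ring.
by rewrite hsumSBr hsum_reflSBr IHn subrr.
Qed.

Lemma F32_term_hsum (F : numFieldType) n (x c : F) :
  not_nonpos_int x -> not_nonpos_int c ->
  F32_term n (x / 2) ((x + 1) / 2) x c 4 = hsum n x c / poch c n.
Proof.
move=> x_ok c_ok; rewrite /F32_term big_mkord /hsum mulr_suml.
apply: eq_bigr => -[k ltkn] _ /=; have lekn : (k <= n)%N by rewrite -ltnS.
have pochc_split : poch c n = poch c k * poch (c + k%:R) (n - k).
  by rewrite -poch_add subnKC.
have pochc_neq0 := poch_neq0 n c_ok.
rewrite pochc_split mulf_eq0 negb_or in pochc_neq0.
case/andP: pochc_neq0 => pochck_neq0 pochck'_neq0.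
have pochx_neq0 := poch_neq0 k x_ok.
have fact_neq0 : k`!%:R != 0 :> F by rewrite pnatr_eq0 -lt0n fact_gt0.
have pow4_neq0 : 4 ^+ k != 0 :> F by rewrite expf_neq0 // pnatr_eq0.
have dup : poch (x / 2) k * poch ((x + 1) / 2) k = poch x (k + k) / 4 ^+ k.
  by rewrite -poch_half mulfK.
rewrite poch_Nnat // pochc_split -(mulrA _ (poch (x / 2) k)) dup poch_add.
by field; rewrite pochx_neq0 pochck_neq0 pochck'_neq0 fact_neq0 pow4_neq0.
Qed.

Theorem mainTheorem8 (C : numClosedFieldType) (n : nat) (a c : C)
  (ha : not_nonpos_int a) (hc : not_nonpos_int c)
  (hb : not_nonpos_int (2 * c - a - n%:R - 1)) :
  F32_term n (a / 2) ((a + 1) / 2) a c 4 =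
  (-1) ^+ n * F32_term n ((2 * c - a - n%:R - 1) / 2) ((2 * c - a - n%:R) / 2)
                        (2 * c - a - n%:R - 1) c 4.
Proof.
set b := 2 * c - a - n%:R - 1.
have -> : 2 * c - a - n%:R = b + 1 by rewrite subrK.
by rewrite !F32_term_hsum // hsum_eq_refl /hsum_refl mulrA.
Qed.
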